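(* For all nonnegative integers $a,b,c$ with $a+b+c=d+1$, the following equalities hold in $\mathcal{B}_d$: $$f^{(a)}\binom{H_2}{b}e^{(c)}=\sum_{k=1}^{\min(a,c)}(-1)^{k-1}\binom{b+k}{k}f^{(a-k)}\binom{H_2}{b+k}e^{(c-k)},$$ $$e^{(a)}\binom{H_1}{b}f^{(c)}=\sum_{k=1}^{\min(a,c)}(-1)^{k-1}\binom{b+k}{k}e^{(a-k)}\binom{H_1}{b+k}f^{(c-k)}$$ (an empty sum being $0$).
   Context: Fix an integer $d\ge 0$. $\mathcal{B}_d$ is the associative $\mathbb{Q}$-algebra with $1$ generated by $e,f,H_1,H_2$ subject to the relations $H_1H_2=H_2H_1$, $H_1e-eH_1=e$, $H_1f-fH_1=-f$, $H_2e-eH_2=-e$, $H_2f-fH_2=f$, $ef-fe=H_1-H_2$, $H_1+H_2=d$, and $H_1(H_1-1)\cdots(H_1-d)=0$. For an element $T$ and integer $m\ge 0$, $T^{(m)}=T^m/m!$ and $\binom{T}{m}=T(T-1)\cdots(T-m+1)/m!$; both are defined to be $0$ for negative $m$. *)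

From mathcomp Require Import all_boot all_order all_algebra.
Set Implicit Arguments. Unset Strict Implicit. Unset Printing Implicit Defensive.
Import GRing.Theory.
Local Open Scope ring_scope.

Definition dpow (A : algType rat) (T : A) (m : nat) : A :=
  (m`!%:R)^-1 *: T ^+ m.

Definition abinom (A : algType rat) (T : A) (m : nat) : A :=
  (m`!%:R)^-1 *: \prod_(i < m) (T - i%:R).

(* The defining relations of B_d, for elements e f H1 H2 of a Q-algebra A.
   B_d is the universal Q-algebra generated by such elements. *)
Definition Bd_relations (d : nat) (A : algType rat) (e f H1 H2 : A) : Prop :=
  H1 * H2 = H2 * H1 /\
  H1 * e - e * H1 = e /\
  H1 * f - f * H1 = - f /\
  H2 * e - e * H2 = - e /\
  H2 * f - f * H2 = f /\
  e * f - f * e = H1 - H2 /\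
  H1 + H2 = d%:R /\
  \prod_(i < d.+1) (H1 - i%:R) = 0.

From mathcomp Require Import all_boot all_order all_algebra.
From mathcomp Require Import ring zify.
Import GRing.Theory Num.Theory.
Local Open Scope ring_scope.
Set Implicit Arguments. Unset Strict Implicit. Unset Printing Implicit Defensive.

(* Both identities say that S(a,b,c) := sum_k (-1)^k C(b+k,k) x^(a-k) binom(K,b+k)
   y^(c-k) vanishes when a + b + c = d + 1, for (x,y,K) = (e,f,H1) and for
   (x,y,K) = (f,e,H2) = (f,e,d-H1), which satisfy the same relations.
   Commuting binom(K,b+k) with y^(c-k) gives
   b! S(a,b,c) = S(a,0,c) (K-c)(K-c-1)...(K-c-b+1) =: Z.
   Since y^(m) shifts K by m and K(K-1)...(K-d) = 0, Z is killed on the right by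
   (K-c-b)...(K-d).  The reordering identity S_{x,y,K}(a,0,c) = S_{y,x,d-K}(c,0,a),
   proved by induction on c from the commutator of y with x^(m), shows in the same
   way that Z is killed by K(K-1)...(K-c+1).  These two polynomials in K have no
   common root, so Z = 0. *)

Ltac eval_poly_identity u E :=
  let H := fresh "H" in
  have H := congr1 (horner_alg u) E;
  rewrite ?(rmorph_nat, rmorphM, rmorphB, rmorphD, rmorphN) in H;
  rewrite -[u](horner_algX u); exact: H.

Lemma natS_neq0 n : (n.+1%:R : rat) != 0.
Proof. by rewrite pnatr_eq0. Qed.

Lemma natS_mul_invfactS n : (n.+1%:R * (n.+1)`!%:R^-1 : rat) = (n`!%:R)^-1.
Proof. by rewrite factS natrM invfM mulrA mulfV ?natS_neq0 // mul1r. Qed.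

Lemma bin_mid_rec b k : ('C(b + k, k) * (b + k).+1 = b.+1 * 'C(b.+1 + k, k))%N.
Proof.
rewrite mulnC; have := mul_bin_down (b + k).+1 k => /= ->.
by rewrite addSn; congr (_ * _)%N; lia.
Qed.

Section Falling.
Variable A : algType rat.
Implicit Types (z K M Z : A).

Lemma mul_prod_intertwine n z (F G : 'I_n -> A) :
  (forall r, z * F r = G r * z) -> z * \prod_(r < n) F r = \prod_(r < n) G r * z.
Proof.
move=> FG; apply: (big_ind2 (fun p q => z * p = q * z)) => [|p1 q1 p2 q2 E1 E2|r _].
- by rewrite mulr1 mul1r.
- by rewrite mulrA E1 -mulrA E2 mulrA.
- exact: FG.
Qed.

Definition falling K (i n : nat) : A := \prod_(r < n) (K - (i + r)%:R).

Lemma falling0 K i : falling K i 0 = 1.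
Proof. by rewrite /falling big_ord0. Qed.

Lemma fallingSr K i n : falling K i n.+1 = falling K i n * (K - (i + n)%:R).
Proof. by rewrite /falling big_ord_recr. Qed.

Lemma fallingD K i n m :
  falling K i (n + m) = falling K i n * falling K (i + n) m.
Proof.
rewrite /falling big_split_ord /=; congr (_ * _); apply: eq_bigr => r _ /=.
by rewrite addnA.
Qed.

Lemma commr_falling K c i n : GRing.comm (K - c%:R) (falling K i n).
Proof.
apply: commr_prod => r _; apply: commrB; last exact: commr_nat.
by apply/commr_sym; apply: commrB; [exact: commr_refl | exact: commr_nat].
Qed.

Lemma falling_comm K i n j m :
  falling K i n * falling K j m = falling K j m * falling K i n.
Proof.
have C : GRing.comm (falling K i n) (falling K j m).
  by rewrite [falling K j m]/falling; apply: commr_prod => r _;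
    apply/commr_sym/commr_falling.
exact: C.
Qed.

Lemma falling_eigenr Z K (c : rat) i n : Z * K = c *: Z ->
  Z * falling K i n = (\prod_(r < n) (c - (i + r)%:R)) *: Z.
Proof.
move=> ZK; elim: n => [|n IH]; first by rewrite falling0 big_ord0 scale1r mulr1.
rewrite fallingSr big_ord_recr /= mulrA IH -scalerAl mulrBr ZK -scalerA.
by rewrite mulr_natr -scaler_nat -scalerBl.
Qed.

Lemma falling_eigenl Z K (c : rat) i n : K * Z = c *: Z ->
  falling K i n * Z = (\prod_(r < n) (c - (i + r)%:R)) *: Z.
Proof.
move=> KZ; elim: n => [|n IH]; first by rewrite falling0 big_ord0 scale1r mul1r.
rewrite fallingSr big_ord_recr /= -mulrA mulrBl KZ mulr_natl -scaler_nat.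
by rewrite -scalerBl -scalerAr IH scalerA mulrC.
Qed.

(* Peeling off the factors of the first product leaves [Z] an eigenvector of
   right multiplication by [K], whose eigenvalue is not a root of the second. *)
Lemma falling_annihilators_eq0 Z K i n j m :
  Z * falling K i n = 0 -> Z * falling K j m = 0 -> (i + n <= j)%N -> Z = 0.
Proof.
elim: n Z => [|n IH] Z Zn Zm le_in_j; first by move: Zn; rewrite falling0 mulr1.
have ZKn : Z * (K - (i + n)%:R) = 0.
  apply: IH.
  - by rewrite -mulrA commr_falling -fallingSr.
  - by rewrite -mulrA commr_falling mulrA Zm mul0r.
  - by apply: leq_trans le_in_j; rewrite leq_add2l.
have ZK : Z * K = (i + n)%:R *: Z.
  by apply/eqP; rewrite scaler_nat -mulr_natr -subr_eq0 -mulrBr ZKn.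
have eig_neq0 : \prod_(r < m) ((i + n)%:R - (j + r)%:R) != 0 :> rat.
  apply/prodf_neq0 => r _; rewrite subr_eq0 eqr_nat; apply/negP => /eqP E.
  by move: le_in_j; rewrite addnS E ltnNge leq_addr.
move: Zm; rewrite (falling_eigenr _ _ ZK) => /eqP.
by rewrite scaler_eq0 (negbTE eig_neq0) => /eqP.
Qed.

Lemma abinomE K k : abinom K k = (k`!%:R)^-1 *: falling K 0 k.
Proof.
by rewrite /abinom /falling; congr (_ *: _); apply: eq_bigr => i _; rewrite add0n.
Qed.

Lemma abinom0 K : abinom K 0 = 1.
Proof. by rewrite /abinom big_ord0 fact0 invr1 scale1r. Qed.

Lemma abinomSr K n : abinom K n * (K - n%:R) = n.+1%:R *: abinom K n.+1.
Proof. by rewrite !abinomE -scalerAl fallingSr add0n scalerA natS_mul_invfactS. Qed.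

Lemma abinom_pascal K k : abinom (K + 1) k.+1 = abinom K k.+1 + abinom K k.
Proof.
set Q := \prod_(i < k) (K - i%:R).
have shiftQ : \prod_(i < k) (K + 1 - (bump 0 i)%:R) = Q.
  by apply: eq_bigr => i _; rewrite /bump /= add1n -natr1 opprD addrA addrAC addrK.
rewrite /abinom big_ord_recl big_ord_recr /= subr0 shiftQ -/Q.
rewrite -(natS_mul_invfactS k) [_ / _]mulrC -scalerA -scalerDr; congr (_ *: _).
have -> : (K + 1) * Q = Q * (K + 1).
  apply: commr_prod => i _ /=; apply: commrB; last exact: commr_nat.
  by apply/commr_sym; apply: commrD; [exact: commr_refl | exact: commr1].
rewrite scaler_nat -[Q *+ _]mulr_natr -mulrDr; congr (_ * _).
by rewrite -natr1 addrA subrK.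
Qed.

Lemma abinom_mul_shift M z k : M * z = z * (M + 1) ->
  abinom M k * z = z * abinom (M + 1) k.
Proof.
move=> Mz; rewrite /abinom -scalerAl -scalerAr; congr (_ *: _); apply/esym.
apply: mul_prod_intertwine => i; rewrite mulrBr -Mz mulrBl; congr (_ - _).
exact: commr_nat.
Qed.

(* Reindexing reverses the order of the factors, so the computation is done in
   the commutative ring {poly rat}. *)
Lemma falling_reflect K m i n : (i + n = m.+1)%N ->
  falling (m%:R - K) i n = (-1) ^+ n * falling K 0 n.
Proof.
move=> Hin.
have P : \prod_(r < n) (m%:R - 'X - (i + r)%:R) =
         (-1) ^+ n * \prod_(r < n) ('X - (0 + r)%:R) :> {poly rat}.
  rewrite -(big_mkord xpredT (fun r => m%:R - 'X - (i + r)%N%:R)).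
  rewrite -(big_mkord xpredT (fun r => 'X - (0 + r)%N%:R)) (big_nat_rev _ _ 0).
  have -> : (-1) ^+ n = \prod_(0 <= r < n) (-1 : {poly rat}).
    by rewrite prodr_const_nat subn0.
  rewrite -big_split /=.
  apply: eq_big_nat => r /andP [_ lt_r_n].
  have -> : (i + (0 + n - r.+1) = m - r)%N by lia.
  rewrite add0n natrB; last by lia.
  by rewrite mulN1r opprB opprB addrC addrA subrK.
have := congr1 (horner_alg K) P.
rewrite rmorphM rmorphXn rmorphN rmorph1 !rmorph_prod /falling => PK.
transitivity (\prod_(r < n) horner_alg K (m%:R - 'X - (i + r)%N%:R)).
  apply: eq_bigr => r _; rewrite !(rmorph_nat, rmorphB).
  by rewrite -[K in LHS](horner_algX K).
rewrite PK; congr (_ * _); apply: eq_bigr => r _; rewrite !(rmorph_nat, rmorphB).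
by rewrite -[K in RHS](horner_algX K).
Qed.

End Falling.

Section DividedPowers.
Variable A : algType rat.
Implicit Types (x y z K : A).

Lemma dpow0 z : dpow z 0 = 1.
Proof. by rewrite /dpow fact0 expr0 invr1 scale1r. Qed.

Lemma dpowSr z m : dpow z m * z = m.+1%:R *: dpow z m.+1.
Proof. by rewrite /dpow -scalerAl -exprSr scalerA natS_mul_invfactS. Qed.

Lemma dpowSl z m : z * dpow z m = m.+1%:R *: dpow z m.+1.
Proof. by rewrite -dpowSr /dpow -scalerAl -scalerAr -exprSr -exprS. Qed.

(* z^(a - k) with the convention z^(m) = 0 for m < 0; note that [dpow z (a - k)]
   alone would give 1 for k > a, by truncated subtraction. *)
Definition dpow_sub z (a k : nat) : A := if (k <= a)%N then dpow z (a - k) else 0.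

Lemma dpow_sub_gt z a k : (a < k)%N -> dpow_sub z a k = 0.
Proof. by move=> lt_a_k; rewrite /dpow_sub leqNgt lt_a_k. Qed.

Lemma dpow_sub_le z a k : (k <= a)%N -> dpow_sub z a k = dpow z (a - k).
Proof. by rewrite /dpow_sub => ->. Qed.

Lemma dpow_sub0 z a : dpow_sub z a 0 = dpow z a.
Proof. by rewrite dpow_sub_le // subn0. Qed.

Lemma dpow_subSS z a k : dpow_sub z a.+1 k.+1 = dpow_sub z a k.
Proof. by rewrite /dpow_sub ltnS subSS. Qed.

Lemma dpow_subSr z c k :
  dpow_sub z c k * z = (c.+1%:R - k%:R) *: dpow_sub z c.+1 k.
Proof.
rewrite /dpow_sub; case: (leqP k c) => le_k_c.
  by rewrite (leqW le_k_c) dpowSr -subSn // natrB // leqW.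
rewrite mul0r; case: (leqP k c.+1) => le_k_c1; last by rewrite scaler0.
have -> : k = c.+1 by apply/eqP; rewrite eqn_leq le_k_c1.
by rewrite subrr scale0r.
Qed.

Lemma dpow_subSl z c k :
  z * dpow_sub z c k = (c.+1%:R - k%:R) *: dpow_sub z c.+1 k.
Proof.
rewrite -dpow_subSr /dpow_sub; case: ifP => _; last by rewrite mulr0 mul0r.
by rewrite dpowSl dpowSr.
Qed.

Lemma sum_sign_natr_shift n (F : nat -> A) :
  \sum_(k < n.+1) (-1) ^+ k *: (k%:R *: F k) =
  - \sum_(j < n) (-1) ^+ j *: (j.+1%:R *: F j.+1).
Proof.
rewrite big_ord_recl /= scale0r scaler0 add0r -sumrN; apply: eq_bigr => j _.
by rewrite /bump /= add1n exprS mulN1r scaleNr.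
Qed.

(* The difference of the two sides of the identities of the theorem, the term
   [k = 0] being the left-hand side. *)
Definition alt_sum x y K (a b c : nat) : A :=
  \sum_(k < a.+1) ((-1) ^+ k * ('C(b + k, k))%:R) *:
     (dpow_sub x a k * abinom K (b + k) * dpow_sub y c k).

Definition alt_term x y K (a c k : nat) : A :=
  dpow_sub x a k * abinom K k * dpow_sub y c k.

Lemma alt_sumE x y K a c :
  alt_sum x y K a 0 c = \sum_(k < a.+1) (-1) ^+ k *: alt_term x y K a c k.
Proof. by apply: eq_bigr => k _; rewrite !add0n binn mulr1. Qed.

Lemma alt_sum_a00 x y K a : alt_sum x y K a 0 0 = dpow x a.
Proof.
rewrite /alt_sum big_ord_recl /= big1 ?addr0.
  by rewrite expr0 mul1r bin0 scale1r !dpow_sub0 dpow0 abinom0 !mulr1.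
by move=> i _; rewrite (dpow_sub_gt y) // mulr0 scaler0.
Qed.

Lemma alt_sum_00c x y K c : alt_sum x y K 0 0 c = dpow y c.
Proof.
by rewrite /alt_sum big_ord1 /= expr0 mul1r bin0 scale1r !dpow_sub0 dpow0 abinom0 !mul1r.
Qed.

Lemma alt_term_gt x y K a c k : (a < k)%N -> alt_term x y K a c k = 0.
Proof. by move=> lt_a_k; rewrite /alt_term dpow_sub_gt // !mul0r. Qed.

Lemma alt_term_mull x y K a c k :
  x * alt_term x y K a c k = (a.+1%:R - k%:R) *: alt_term x y K a.+1 c k.
Proof. by rewrite /alt_term !mulrA dpow_subSl -!scalerAl. Qed.

Lemma alt_term_mulr x y K a c k :
  alt_term x y K a c k * y = (c.+1%:R - k%:R) *: alt_term x y K a c.+1 k.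
Proof. by rewrite /alt_term -mulrA dpow_subSr -scalerAr. Qed.

End DividedPowers.

Section Lowering.
Variables (d : nat) (A : algType rat) (x y K : A).
Hypothesis Ky : K * y = y * (K - 1).

Local Notation L := (d%:R - K).

Lemma y_mul_K : y * K = (K + 1) * y.
Proof. by rewrite mulrDl mul1r Ky mulrBr mulr1 subrK. Qed.

Lemma L_mul_y : L * y = y * (L + 1).
Proof.
rewrite mulrBl Ky -(commr_nat y d) -mulrBr; congr (_ * _).
by rewrite opprB addrA addrAC.
Qed.

Lemma expy_mul_K m : y ^+ m * K = (K + m%:R) * y ^+ m.
Proof.
elim: m => [|m IH]; first by rewrite expr0 mul1r mulr1 addr0.
rewrite exprSr -mulrA y_mul_K mulrA mulrDr mulr1 IH -[X in _ + X]mul1r -mulrDl.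
by rewrite -mulrA -exprSr -addrA natr1.
Qed.

Lemma dpowy_mul_K m c : dpow y m * (K - (c + m)%:R) = (K - c%:R) * dpow y m.
Proof.
rewrite /dpow -scalerAl -scalerAr mulrBr expy_mul_K mulr_natr.
by rewrite -(mulr_natl (y ^+ m)) -mulrBl natrD opprD addrA addrAC addrK.
Qed.

Lemma dpowy_mul_falling m i n :
  dpow y m * falling K (i + m) n = falling K i n * dpow y m.
Proof.
rewrite /falling; apply: mul_prod_intertwine => r; rewrite -dpowy_mul_K.
by congr (_ * (K - _%:R)); rewrite addnAC.
Qed.

Lemma falling_mul_y i n : falling K i n * y = y * falling K i.+1 n.
Proof.
rewrite /falling; apply/esym/mul_prod_intertwine => r; apply/esym.
rewrite mulrBl Ky mulr_natl -mulr_natr -mulrBr addSn -natr1 opprD addrA.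
by rewrite addrAC.
Qed.

Lemma dpow_suby_mul_K b c k :
  dpow_sub y c k * (K - (b + c)%:R) = (K - (b + k)%:R) * dpow_sub y c k.
Proof.
case: (leqP k c) => [le_k_c|lt_c_k]; last by rewrite dpow_sub_gt // mul0r mulr0.
by rewrite dpow_sub_le // -dpowy_mul_K -addnA subnKC.
Qed.

Lemma alt_sum_mulr_K a b c :
  alt_sum x y K a b c * (K - (b + c)%:R) = b.+1%:R *: alt_sum x y K a b.+1 c.
Proof.
rewrite /alt_sum mulr_suml scaler_sumr; apply: eq_bigr => k _.
rewrite -scalerAl -!mulrA dpow_suby_mul_K [abinom K (b + k) * _]mulrA abinomSr.
rewrite -scalerAl -scalerAr scalerA scalerA addSn !mulrA; congr (_ *: _).
by rewrite -[LHS]mulrA -natrM bin_mid_rec addSn natrM mulrCA mulrA.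
Qed.

Lemma alt_sum_factor a b c :
  alt_sum x y K a b c = (b`!%:R)^-1 *: (alt_sum x y K a 0 c * falling K c b).
Proof.
elim: b => [|b IH]; first by rewrite fact0 invr1 scale1r falling0 mulr1.
apply: (scalerI (natS_neq0 b)); rewrite -alt_sum_mulr_K IH scalerA.
by rewrite natS_mul_invfactS fallingSr -scalerAl mulrA addnC.
Qed.

Lemma alt_term_mulr_K a c j :
  alt_term x y K a c j * (K - c%:R) = j.+1%:R *: alt_term x y K a.+1 c.+1 j.+1.
Proof.
have := dpow_suby_mul_K 0 c j; rewrite !add0n => yK.
rewrite /alt_term -mulrA yK mulrA -(mulrA _ _ (K - _)) abinomSr.
by rewrite -scalerAr -scalerAl !dpow_subSS.
Qed.

Lemma alt_sum_mulr_y a c :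
  c.+1%:R *: alt_sum x y K a.+1 0 c.+1 =
  alt_sum x y K a.+1 0 c * y - alt_sum x y K a 0 c * (K - c%:R).
Proof.
apply/eqP; rewrite [X in _ == X]addrC -subr_eq; apply/eqP.
rewrite !alt_sumE scaler_sumr !mulr_suml -sumrB.
under eq_bigr => k _ do rewrite scaler_nat scalerMnr -scaler_nat -scalerAl
  alt_term_mulr -scalerBr -scalerBl subKr.
rewrite sum_sign_natr_shift; congr (- _); apply: eq_bigr => j _.
by rewrite -scalerAl alt_term_mulr_K.
Qed.

Hypothesis Kd : falling K 0 d.+1 = 0.

Lemma falling_mul_expy_eq0 n m : (n + m = d.+1)%N -> falling K 0 n * y ^+ m = 0.
Proof.
elim: m n => [|m IH] n nm; first by rewrite expr0 mulr1 -Kd -nm addn0.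
(* [K] kills [W] by induction, so [y * W] is an eigenvector of [K] for the
   eigenvalue -1, which is not a root of K(K-1)...(K-d). *)
set W := falling K 1 n * y ^+ m.
have KW : K * W = 0.
  have K1 : falling K 0 1 = K by rewrite /falling big_ord1 addn0 subr0.
  have := IH n.+1; rewrite addSnnS => /(_ nm).
  by rewrite -add1n fallingD K1 -mulrA.
have yW_eigen : K * (y * W) = (-1) *: (y * W).
  by rewrite mulrA Ky -mulrA mulrBl mul1r KW sub0r mulrN scaleN1r.
have eig_neq0 : \prod_(r < d.+1) (-1 - (0 + r)%:R) != 0 :> rat.
  by apply/prodf_neq0 => r _; rewrite add0n -opprD nat1r oppr_eq0 pnatr_eq0.
have := falling_eigenl 0 d.+1 yW_eigen; rewrite Kd mul0r => /esym/eqP.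
rewrite scaler_eq0 (negbTE eig_neq0) => /eqP yW0.
rewrite exprS mulrA falling_mul_y -mulrA; exact: yW0.
Qed.

Lemma alt_sum_mul_falling_eq0 a c n : (c + n = d.+1)%N ->
  alt_sum x y K a 0 c * falling K c n = 0.
Proof.
move=> cn; rewrite /alt_sum mulr_suml big1 // => k _; rewrite -scalerAl add0n.
case: (leqP k c) => [le_k_c|lt_c_k].
  suff Z0 : abinom K k * (dpow y (c - k) * falling K c n) = 0.
    by rewrite (dpow_sub_le _ le_k_c) -!mulrA Z0 mulr0 scaler0.
  have c_eq : c = (k + (c - k))%N by rewrite subnKC.
  rewrite {2}c_eq dpowy_mul_falling mulrA abinomE -scalerAl -fallingD.
  by rewrite /dpow -scalerAl -scalerAr falling_mul_expy_eq0 ?scaler0 //; lia.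
by rewrite (dpow_sub_gt _ lt_c_k) mulr0 mul0r scaler0.
Qed.

End Lowering.

Section Raising.
Variables (d : nat) (A : algType rat) (x y K : A).
Hypothesis Kx : K * x = x * (K + 1).
Hypothesis Ky : K * y = y * (K - 1).
Hypothesis yx : y * x - x * y = d%:R - 2%:R * K.

Local Notation L := (d%:R - K).
Local Notation h := (d%:R - 2%:R * K).

Lemma L_mul_x : L * x = x * (L - 1).
Proof.
rewrite mulrBl Kx -(commr_nat x d) -mulrBr; congr (_ * _).
by rewrite opprD addrA.
Qed.

Lemma h_mul_x m : (h - m%:R) * x = x * (h - m.+2%:R).
Proof.
have hx : h * x = x * (h - 2%:R).
  rewrite mulrBl -mulrA Kx -(commr_nat x d) mulrA -(commr_nat x 2) -mulrA -mulrBr.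
  by congr (_ * _); rewrite mulrDr mulr1 opprD addrA.
rewrite mulrBl hx -(commr_nat x m) -mulrBr; congr (_ * _).
by rewrite -addrA -opprD -natrD add2n.
Qed.

Lemma y_mul_expx m :
  y * x ^+ m.+1 = x ^+ m.+1 * y + m.+1%:R *: (x ^+ m * (h - m%:R)).
Proof.
have yx' : y * x = x * y + h by rewrite -yx addrC subrK.
elim: m => [|m IH]; first by rewrite expr1 expr0 mul1r subr0 scale1r yx'.
rewrite exprSr mulrA IH mulrDl -mulrA yx' -scalerAl -[x ^+ m * _ * x]mulrA h_mul_x.
rewrite [x ^+ m * (x * _)]mulrA -exprSr mulrDr -addrA; congr (_ + _).
  by rewrite mulrA.
rewrite !scalerAr -mulrDr; congr (_ * _); move: h => u.
by rewrite !scaler_nat !mulrnBl addrA -mulrS -!mulrnA mulnC.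
Qed.

Lemma y_mul_dpowx m : y * dpow x m.+1 = dpow x m.+1 * y + dpow x m * (h - m%:R).
Proof.
rewrite /dpow -scalerAr y_mul_expx scalerDr scalerA [_ * m.+1%:R]mulrC.
by rewrite natS_mul_invfactS !scalerAl.
Qed.

Lemma dpow_subx_mul_y a k :
  dpow_sub x a.+1 k * y = y * dpow_sub x a.+1 k - dpow_sub x a k * (h - a%:R + k%:R).
Proof.
case: (leqP k a) => [le_k_a|lt_a_k].
  rewrite !dpow_sub_le ?(leqW le_k_a) // subSn // y_mul_dpowx.
  by rewrite natrB // opprB addrA addrAC addrK.
case: (ltnP a.+1 k) => [lt_a1_k|le_k_a1].
  by rewrite !dpow_sub_gt ?mul0r ?mulr0 ?subr0 // ltnW.
have -> : k = a.+1 by apply/eqP; rewrite eqn_leq le_k_a1.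
by rewrite dpow_sub_le // subnn dpow0 dpow_sub_gt // mul0r subr0 mul1r mulr1.
Qed.

Lemma alt_term_commr_y a c k :
  alt_term y x L c a.+1 k * y - y * alt_term y x L c a.+1 k =
  (c.+1%:R - k%:R) *:
    (dpow_sub y c.+1 k * (abinom (L + 1) k - abinom L k) * dpow_sub x a.+1 k)
  - alt_term y x L c a k * (h - a%:R + k%:R).
Proof.
rewrite /alt_term -mulrA dpow_subx_mul_y mulrBr !mulrA.
rewrite -[dpow_sub y c k * _ * y]mulrA (abinom_mul_shift _ (L_mul_y d Ky)) mulrA.
rewrite dpow_subSr dpow_subSl -!scalerAl.
by rewrite mulrBr mulrBl scalerBr addrAC.
Qed.

Lemma alt_sum_swap_commr_y a c :
  y * alt_sum y x L c 0 a.+1 =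
  alt_sum y x L c 0 a.+1 * y + alt_sum y x L c 0 a * (h - a%:R + c%:R).
Proof.
apply/eqP; rewrite [X in _ == X]addrC -subr_eq -opprB eqr_oppLR; apply/eqP.
rewrite !alt_sumE mulr_suml mulr_sumr -sumrB.
under eq_bigr => k _ do
  rewrite -scalerAl -scalerAr -scalerBr alt_term_commr_y scalerBr.
rewrite sumrB.
have -> : \sum_(k < c.+1) (-1) ^+ k *: ((c.+1%:R - k%:R) *:
     (dpow_sub y c.+1 k * (abinom (L + 1) k - abinom L k) * dpow_sub x a.+1 k)) =
   - \sum_(j < c.+1) (-1) ^+ j *: ((c%:R - j%:R) *: alt_term y x L c a j).
  rewrite big_ord_recl [in RHS]big_ord_recr /= !abinom0 !subrr mulr0 mul0r.
  rewrite scale0r !scaler0 add0r addr0 -sumrN; apply: eq_bigr => j _.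
  rewrite /bump /= add1n abinom_pascal [abinom L j.+1 + _]addrC addrK !dpow_subSS.
  by rewrite exprS mulN1r scaleNr -!natr1 opprD addrACA subrr addr0.
rewrite mulr_suml -opprD -big_split /=; congr (- _); apply: eq_bigr => j _.
rewrite -scalerAl -scalerDr; congr (_ *: _).
rewrite -{1}[alt_term _ _ _ _ _ _]mulr1 scalerAr -mulrDr; congr (_ * _).
rewrite scalerBl !scaler_nat; move: (h - a%:R) => u.
by rewrite [u + _]addrC subrKA addrC.
Qed.

Lemma alt_sum_swap_mull_y a c :
  c.+1%:R *: alt_sum y x L c.+1 0 a.+1 =
  y * alt_sum y x L c 0 a.+1 - alt_sum y x L c 0 a * (L - a%:R).
Proof.
apply/eqP; rewrite [X in _ == X]addrC -subr_eq; apply/eqP.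
have -> : alt_sum y x L c 0 a.+1 =
          \sum_(k < c.+2) (-1) ^+ k *: alt_term y x L c a.+1 k.
  by rewrite alt_sumE [RHS]big_ord_recr /= alt_term_gt ?scaler0 ?addr0.
rewrite !alt_sumE scaler_sumr mulr_sumr mulr_suml -sumrB.
under eq_bigr => k _ do rewrite scaler_nat scalerMnr -scaler_nat -scalerAr
  alt_term_mull -scalerBr -scalerBl subKr.
rewrite sum_sign_natr_shift; congr (- _); apply: eq_bigr => j _.
by rewrite -scalerAl (alt_term_mulr_K _ L_mul_x).
Qed.

Lemma alt_sum_swap a c : alt_sum x y K a 0 c = alt_sum y x L c 0 a.
Proof.
elim: c a => [|c IH] a; first by rewrite alt_sum_a00 alt_sum_00c.
case: a => [|a]; first by rewrite alt_sum_00c alt_sum_a00.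
apply: (scalerI (natS_neq0 c)).
rewrite (alt_sum_mulr_y x Ky) alt_sum_swap_mull_y alt_sum_swap_commr_y !IH.
rewrite -addrA -mulrBr -mulrN; congr (_ + _ * _).
have E : - ('X - c%:R) = d%:R - 2%:R * 'X - a%:R + c%:R - (d%:R - 'X - a%:R)
  :> {poly rat} by ring.
eval_poly_identity K E.
Qed.

End Raising.

Definition sl2_relations (d : nat) (A : algType rat) (x y K : A) : Prop :=
  [/\ K * x = x * (K + 1), K * y = y * (K - 1),
      y * x - x * y = d%:R - 2%:R * K & falling K 0 d.+1 = 0].

Lemma sl2_relations_swap d (A : algType rat) (x y K : A) :
  sl2_relations d x y K -> sl2_relations d y x (d%:R - K).
Proof.
case=> Kx Ky yx Kd; split.
- exact: L_mul_y.
- exact: L_mul_x.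
- rewrite -opprB yx.
  have E : - (d%:R - 2%:R * 'X) = d%:R - 2%:R * (d%:R - 'X) :> {poly rat} by ring.
  eval_poly_identity K E.
- by rewrite (falling_reflect _ (add0n d.+1)) Kd mulr0.
Qed.

Lemma alt_sum_eq0 d (A : algType rat) (x y K : A) a b c :
  sl2_relations d x y K -> (a + b + c = d.+1)%N -> alt_sum x y K a b c = 0.
Proof.
move=> rel abc; have [Kx Ky yx Kd] := rel.
have [_ Lx _ Ld] := sl2_relations_swap rel.
rewrite (alt_sum_factor x Ky).
suff -> : alt_sum x y K a 0 c * falling K c b = 0 by rewrite scaler0.
apply: (@falling_annihilators_eq0 _ _ K 0 c (c + b) a); last by rewrite add0n leq_addr.
- have acb : (a + (c + b) = d.+1)%N by lia.
  rewrite -mulrA falling_comm -fallingD (alt_sum_swap Kx Ky yx).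
  rewrite -(signrMK (c + b) (falling K 0 _)) -(falling_reflect K acb).
  rewrite mulrA (commr_sign _ (c + b)) -mulrA.
  by rewrite (alt_sum_mul_falling_eq0 y Lx Ld) ?mulr0.
- have cba : (c + (b + a) = d.+1)%N by lia.
  by rewrite -mulrA -fallingD (alt_sum_mul_falling_eq0 x Ky Kd).
Qed.

Lemma alt_sum_eq0_leading_term (A : algType rat) (x y K : A) a b c :
  alt_sum x y K a b c = 0 ->
  dpow x a * abinom K b * dpow y c =
  \sum_(1 <= k < (minn a c).+1)
     ((-1) ^+ (k.-1) * ('C(b + k, k))%:R) *:
       (dpow x (a - k) * abinom K (b + k) * dpow y (c - k)).
Proof.
rewrite /alt_sum big_ord_recl /= expr0 mul1r addn0 bin0 scale1r !dpow_sub0.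
move/eqP; rewrite addr_eq0 => /eqP ->.
rewrite big_add1 /= big_mkord.
rewrite (big_ord_widen a (fun i => ((-1) ^+ i * 'C((b + i.+1)%N, i.+1)%:R) *:
     (dpow x (a - i.+1)%N * abinom K (b + i.+1)%N * dpow y (c - i.+1)%N)) (geq_minl a c)).
rewrite (bigID (fun j : 'I_a => (j < minn a c)%N)) /= [X in _ + X]big1 ?addr0.
  rewrite -sumrN; apply: eq_bigr => j.
  rewrite leq_min => /andP [lt_j_a lt_j_c].
  rewrite /bump /= add1n !dpow_sub_le // exprS mulN1r /= -scaleNr; congr (_ *: _).
  by rewrite mulNr opprK.
move=> j; rewrite -leqNgt geq_min leqNgt ltn_ord /= => le_c_j.
by rewrite /bump /= add1n (dpow_sub_gt y) ?mulr0 ?scaler0 // ltnS.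
Qed.

Lemma Bd_relations_sl2 d (A : algType rat) (e f H1 H2 : A) :
  Bd_relations d e f H1 H2 -> H2 = d%:R - H1 /\ sl2_relations d e f H1.
Proof.
move=> [_ [H1e [H1f [_ [_ [ef [H12d H1d]]]]]]].
have H2E : H2 = d%:R - H1 by rewrite -H12d addrC addKr.
split=> //; split.
- by move/eqP: H1e; rewrite subr_eq mulrDr mulr1 addrC => /eqP.
- by move/eqP: H1f; rewrite subr_eq mulrBr mulr1 addrC => /eqP.
- by rewrite -opprB ef H2E opprB mulr2n mulrDl mul1r opprD addrA.
- by rewrite /falling -H1d; apply: eq_bigr => i _; rewrite add0n.
Qed.

Unset Implicit Arguments.

Theorem theorem6p1 (d : nat) (A : algType rat) (e f H1 H2 : A) :
  Bd_relations d e f H1 H2 ->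
  forall a b c : nat, (a + b + c = d.+1)%N ->
    dpow f a * abinom H2 b * dpow e c =
      \sum_(1 <= k < (minn a c).+1)
         ((-1) ^+ (k.-1) * ('C(b + k, k))%:R) *:
           (dpow f (a - k) * abinom H2 (b + k) * dpow e (c - k))
  /\
    dpow e a * abinom H1 b * dpow f c =
      \sum_(1 <= k < (minn a c).+1)
         ((-1) ^+ (k.-1) * ('C(b + k, k))%:R) *:
           (dpow e (a - k) * abinom H1 (b + k) * dpow f (c - k)).
Proof.
move=> /Bd_relations_sl2 [-> rel] a b c abc.
split; apply: alt_sum_eq0_leading_term; apply: (alt_sum_eq0 _ abc).
  exact: sl2_relations_swap.
exact: rel.
Qed.
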